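(* Let $\mathcal{C}$ be a small category, $n\ge0$, and let $M$ be an indecomposable $k\widetilde{\mathcal{E}}^{\mathcal{C}}_n$-module. Then for every $0\le i\le n+1$ the $k\widetilde{\mathcal{E}}^{\mathcal{C}}_{n+1}$-module $\partial_i^*M$ is indecomposable. Likewise, if $M$ is an indecomposable $k\mathcal{C}$-module, then $\partial_0^*M$ and $\partial_1^*M$ are indecomposable $k\widetilde{\mathcal{G}}^{\mathcal{C}}_1$-modules.
   Context: A module over a small category is a functor to finite-dimensional $k$-vector spaces ($k$ a field); indecomposable means nonzero and not isomorphic to a direct sum of two nonzero modules; $F^*M=M\circ F$. $\widetilde{\mathcal{E}}^{\mathcal{C}}_n=\mathcal{C}^{[n]}$ has objects strings $x_0\xrightarrow{u_1}\cdots\xrightarrow{u_n}x_n$ of morphisms of $\mathcal{C}$ and morphisms commutative ladders $(f_0,\dots,f_n)$; the face functors $\partial_i:\widetilde{\mathcal{E}}^{\mathcal{C}}_{n+1}\to\widetilde{\mathcal{E}}^{\mathcal{C}}_n$ ($0\le i\le n+1$) delete $x_i$ (dropping the first or last morphism for $i=0$, $i=n+1$, and composing $u_{i+1}u_i$ otherwise) and delete $f_i$. $\widetilde{\mathcal{G}}^{\mathcal{C}}_1$ is the category with objects all morphisms $u:a\to b$ of $\mathcal{C}$ and morphisms $[u]\to[v]$ ($v:c\to d$) the identities and the pairs $(w\circ u,\;v\circ w)$ for $w:b\to c$; $\partial_0[u]=b$, $\partial_1[u]=a$. *)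

From HB Require Import structures.
From mathcomp Require Import all_boot all_order all_algebra.
From Stdlib Require Import ProofIrrelevance FunctionalExtensionality.
Set Implicit Arguments. Unset Strict Implicit. Unset Printing Implicit Defensive.
Import GRing.Theory.
Local Open Scope ring_scope.

Record category := Cat {
  Obj :> Type;
  Hom : Obj -> Obj -> Type;
  idm : forall x, Hom x x;
  cmp : forall x y z, Hom y z -> Hom x y -> Hom x z;
  comp1f : forall x y (f : Hom x y), cmp (idm y) f = f;
  compf1 : forall x y (f : Hom x y), cmp f (idm x) = f;
  compA : forall x y z w (h : Hom z w) (g : Hom y z) (f : Hom x y),
      cmp h (cmp g f) = cmp (cmp h g) f
}.
Arguments Hom {c}.
Arguments idm {c}.
Arguments cmp {c x y z}.

Record functor (D E : category) := Functor {
  fobj :> D -> E;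
  fmap : forall x y, Hom x y -> Hom (fobj x) (fobj y);
  fmap_id : forall x, fmap (idm x) = idm (fobj x);
  fmap_comp : forall x y z (g : Hom y z) (f : Hom x y),
      fmap (cmp g f) = cmp (fmap g) (fmap f)
}.
Arguments fmap {D E} _ {x y}.

(* Modules: functors to finite-dimensional k-vector spaces, presented  *)
(* in bases: M x = k^(mdim x) (row vectors), and a morphism f : x -> y  *)
(* acts by v |-> v *m mact f, so functoriality reads                    *)
(* mact (g o f) = mact f *m mact g.                                     *)
Record module (k : fieldType) (D : category) := Module {
  mdim : D -> nat;
  mact : forall x y, Hom x y -> 'M[k]_(mdim x, mdim y);
  mact_id : forall x, mact (idm x) = 1%:M;
  mact_comp : forall x y z (g : Hom y z) (f : Hom x y),
      mact (cmp g f) = mact f *m mact g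
}.
Arguments mdim {k D}.
Arguments mact {k D} m {x y}.

Section Modules.
Variables (k : fieldType) (D : category).

Definition mod_iso (M N : module k D) : Prop :=
  exists (phi : forall x, 'M[k]_(mdim M x, mdim N x))
         (psi : forall x, 'M[k]_(mdim N x, mdim M x)),
    (forall x, phi x *m psi x = 1%:M /\ psi x *m phi x = 1%:M) /\
    (forall x y (f : Hom x y), mact M f *m phi y = phi x *m mact N f).

Definition mod_nonzero (M : module k D) : Prop := exists x, (0 < mdim M x)%N.

Lemma dsum_id (A B : module k D) x :
  block_mx (mact A (idm x)) 0 0 (mact B (idm x)) = 1%:M.
Proof. by rewrite !mact_id -scalar_mx_block. Qed.

Lemma dsum_comp (A B : module k D) x y z (g : Hom y z) (f : Hom x y) :
  block_mx (mact A (cmp g f)) 0 0 (mact B (cmp g f)) =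
  block_mx (mact A f) 0 0 (mact B f) *m block_mx (mact A g) 0 0 (mact B g).
Proof.
by rewrite mulmx_block !mact_comp !mulmx0 !mul0mx !addr0 !add0r.
Qed.

Definition dsum (A B : module k D) : module k D :=
  @Module k D (fun x => (mdim A x + mdim B x)%N)
    (fun x y f => block_mx (mact A f) 0 0 (mact B f))
    (@dsum_id A B) (@dsum_comp A B).

Definition indecomposable (M : module k D) : Prop :=
  mod_nonzero M /\
  ~ (exists A B : module k D,
        mod_nonzero A /\ mod_nonzero B /\ mod_iso M (dsum A B)).
End Modules.

Section Pullback.
Variables (k : fieldType) (D E : category) (F : functor D E) (M : module k E).
Lemma pull_id x : mact M (fmap F (idm x)) = 1%:M.
Proof. by rewrite fmap_id mact_id. Qed.
Lemma pull_comp x y z (g : Hom y z) (f : Hom x y) :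
  mact M (fmap F (cmp g f)) = mact M (fmap F f) *m mact M (fmap F g).
Proof. by rewrite fmap_comp mact_comp. Qed.
Definition pullback : module k D :=
  @Module k D (fun x => mdim M (F x)) (fun x y f => mact M (fmap F f))
    pull_id pull_comp.
End Pullback.

Lemma sig_eqP (A : Type) (P : A -> Prop) (u v : sig P) :
  proj1_sig u = proj1_sig v -> u = v.
Proof.
case: u => a pa; case: v => b pb /= eab; subst b.
by rewrite (proof_irrelevance _ pa pb).
Qed.

(* An object is x_0 -u_1-> x_1 -> ... -u_n-> x_n, stored as             *)
(* sobj : 'I_n.+1 -> C and smor k : x_k -> x_(k+1) for k : 'I_n.        *)
Section Strings.
Variable C : category.

Definition wid {n} (k : 'I_n) : 'I_n.+1 := widen_ord (leqnSn n) k.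
Definition suc {n} (k : 'I_n) : 'I_n.+1 := lift ord0 k.

Record string (n : nat) := Str {
  sobj : 'I_n.+1 -> C;
  smor : forall k : 'I_n, Hom (sobj (wid k)) (sobj (suc k))
}.

Record ladder n (s t : string n) := Lad {
  lmap : forall j : 'I_n.+1, Hom (sobj s j) (sobj t j);
  lcomm : forall k : 'I_n,
      cmp (smor t k) (lmap (wid k)) = cmp (lmap (suc k)) (smor s k)
}.

Lemma ladder_eq n (s t : string n) (f g : ladder s t) :
  (forall j, lmap f j = lmap g j) -> f = g.
Proof.
case: f => f hf; case: g => g hg /= efg.
have e : f = g by apply: functional_extensionality_dep.
subst g; by rewrite (proof_irrelevance _ hf hg).
Qed.

Lemma lad_id_comm n (s : string n) k :
  cmp (smor s k) (idm (sobj s (wid k))) = cmp (idm (sobj s (suc k))) (smor s k).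
Proof. by rewrite comp1f compf1. Qed.

Definition lad_id n (s : string n) : ladder s s :=
  @Lad n s s (fun j => idm (sobj s j)) (@lad_id_comm n s).

Lemma lad_comp_comm n (s t u : string n) (g : ladder t u) (f : ladder s t) k :
  cmp (smor u k) (cmp (lmap g (wid k)) (lmap f (wid k))) =
  cmp (cmp (lmap g (suc k)) (lmap f (suc k))) (smor s k).
Proof.
by rewrite compA lcomm -compA lcomm compA.
Qed.

Definition lad_comp n (s t u : string n) (g : ladder t u) (f : ladder s t)
  : ladder s u :=
  @Lad n s u (fun j => cmp (lmap g j) (lmap f j)) (@lad_comp_comm n s t u g f).

Lemma lad_comp1f n (s t : string n) (f : ladder s t) : lad_comp (lad_id t) f = f.
Proof. by apply: ladder_eq => j /=; rewrite comp1f. Qed.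
Lemma lad_compf1 n (s t : string n) (f : ladder s t) : lad_comp f (lad_id s) = f.
Proof. by apply: ladder_eq => j /=; rewrite compf1. Qed.
Lemma lad_compA n (s t u v : string n) (h : ladder u v) (g : ladder t u)
  (f : ladder s t) : lad_comp h (lad_comp g f) = lad_comp (lad_comp h g) f.
Proof. by apply: ladder_eq => j /=; rewrite compA. Qed.

Definition Estr (n : nat) : category :=
  @Cat (string n) (@ladder n) (@lad_id n) (@lad_comp n)
    (@lad_comp1f n) (@lad_compf1 n) (@lad_compA n).

Definition castH m (X : 'I_m -> C) (a b a' b' : 'I_m) (ea : a = a') (eb : b = b')
  (f : Hom (X a) (X b)) : Hom (X a') (X b') :=
  match ea in _ = a0 return Hom (X a0) (X b') with
  | erefl => match eb in _ = b0 return Hom (X a) (X b0) with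
             | erefl => f end end.
Arguments castH {m} X {a b a' b'} ea eb f.

Lemma castH_nat m (X Y : 'I_m -> C) (fs : forall j, Hom (X j) (Y j))
  a b a' b' (ea : a = a') (eb : b = b') u v :
  cmp v (fs a) = cmp (fs b) u ->
  cmp (castH Y ea eb v) (fs a') = cmp (fs b') (castH X ea eb u).
Proof. by case: a' / ea; case: b' / eb. Qed.

Lemma castH_comp m (X : 'I_m -> C) a b c a' c' (ea : a = a') (ec : c = c')
  (g : Hom (X b) (X c)) (f : Hom (X a) (X b)) :
  castH X ea ec (cmp g f) = cmp (castH X (erefl b) ec g) (castH X ea (erefl b) f).
Proof. by case: a' / ea; case: c' / ec. Qed.

Section Face.
Variables (n : nat) (i : 'I_n.+2).

Lemma faceA_s (k : 'I_n) : (k.+1 < i)%N -> wid (wid k) = lift i (wid k).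
Proof. by move=> h; apply: val_inj; rewrite /= /bump leqNgt (ltn_trans (ltnSn k) h). Qed.
Lemma faceA_t (k : 'I_n) : (k.+1 < i)%N -> suc (wid k) = lift i (suc k).
Proof. by move=> h; apply: val_inj; rewrite /= /bump /= leqNgt h. Qed.
Lemma faceB_s (k : 'I_n) : (i < k.+1)%N -> wid (suc k) = lift i (wid k).
Proof. by move=> h; apply: val_inj; rewrite /= /bump /= -ltnS h. Qed.
Lemma faceB_t (k : 'I_n) : (i < k.+1)%N -> suc (suc k) = lift i (suc k).
Proof. by move=> h; apply: val_inj; rewrite /= /bump /= (ltnW h). Qed.
Lemma faceC_s (k : 'I_n) : (k.+1 <= i)%N -> (i <= k.+1)%N -> wid (wid k) = lift i (wid k).
Proof. by move=> h1 h2; apply: val_inj; rewrite /= /bump leqNgt h1. Qed.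
Lemma faceC_m (k : 'I_n) : suc (wid k) = wid (suc k) :> 'I_n.+2.
Proof. by apply: val_inj. Qed.
Lemma faceC_t (k : 'I_n) : (i <= k.+1)%N -> suc (suc k) = lift i (suc k).
Proof. by move=> h; apply: val_inj; rewrite /= /bump /= h. Qed.

(* the morphisms of d_i s : u_1..u_(i-1), u_(i+1) o u_i, u_(i+2)..; for
   i = 0 (resp. i = n+1) the first (resp. last) morphism is dropped *)
Definition face_mor (X : 'I_n.+2 -> C)
  (U : forall k : 'I_n.+1, Hom (X (wid k)) (X (suc k))) (k : 'I_n) :
  Hom (X (lift i (wid k))) (X (lift i (suc k))).
Proof.
case: (ltnP k.+1 i) => h1.
  exact: (castH X (faceA_s h1) (faceA_t h1) (U (wid k))).
case: (ltnP i k.+1) => h2.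
  exact: (castH X (faceB_s h2) (faceB_t h2) (U (suc k))).
exact: (castH X (faceC_s h2 h1) (faceC_t h1)
          (cmp (U (suc k)) (castH X (erefl _) (faceC_m k) (U (wid k))))).
Defined.

Definition face_str (s : string n.+1) : string n :=
  @Str n (fun j => sobj s (lift i j)) (face_mor (@smor _ s)).

Lemma face_lcomm (s t : string n.+1) (f : ladder s t) (k : 'I_n) :
  cmp (smor (face_str t) k) (lmap f (lift i (wid k))) =
  cmp (lmap f (lift i (suc k))) (smor (face_str s) k).
Proof.
rewrite /= /face_mor; case: (ltnP k.+1 i) => h1.
  by apply: castH_nat; apply: lcomm.
case: (ltnP i k.+1) => h2.
  by apply: castH_nat; apply: lcomm.
apply: castH_nat.
rewrite -compA (castH_nat (erefl _) (faceC_m k) (lcomm f (wid k))) !compA.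
by rewrite (lcomm f (suc k)).
Qed.

Definition face_lad (s t : string n.+1) (f : ladder s t) :
  ladder (face_str s) (face_str t) :=
  @Lad n (face_str s) (face_str t) (fun j => lmap f (lift i j)) (face_lcomm f).

Lemma face_id (s : Estr n.+1) : face_lad (idm s) = @idm (Estr n) (face_str s).
Proof. by apply: ladder_eq. Qed.
Lemma face_comp (s t u : Estr n.+1) (g : Hom t u) (f : Hom s t) :
  face_lad (cmp g f) = @cmp (Estr n) _ _ _ (face_lad g) (face_lad f).
Proof. by apply: ladder_eq. Qed.

Definition face : functor (Estr n.+1) (Estr n) :=
  @Functor (Estr n.+1) (Estr n) face_str face_lad face_id face_comp.
End Face.
End Strings.

(* The category G~^C_1: objects are the morphisms u : a -> b of C;      *)
(* morphisms [u] -> [v] (v : c -> d) are the identities and the pairs   *)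
(* (w o u, v o w) for w : b -> c; composition is componentwise.         *)
Section G1.
Variable C : category.

Record arrow := Arr { asrc : C; atgt : C; amor : Hom asrc atgt }.

Definition id_pair (U V : arrow) (e : U = V) :
  Hom (asrc U) (asrc V) * Hom (atgt U) (atgt V) :=
  eq_rect U (fun W => (Hom (asrc U) (asrc W) * Hom (atgt U) (atgt W))%type)
    (idm (asrc U), idm (atgt U)) V e.

Definition G1rel (U V : arrow)
  (pq : Hom (asrc U) (asrc V) * Hom (atgt U) (atgt V)) : Prop :=
  (exists e : U = V, pq = id_pair e) \/
  (exists w : Hom (atgt U) (asrc V), pq = (cmp w (amor U), cmp (amor V) w)).

Definition G1hom (U V : arrow) :=
  { pq : Hom (asrc U) (asrc V) * Hom (atgt U) (atgt V) | G1rel pq }.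

Lemma G1rel_id U : G1rel (idm (asrc U), idm (atgt U)).
Proof. by left; exists (erefl U). Qed.

Definition G1id (U : arrow) : G1hom U U := exist _ _ (G1rel_id U).

Lemma G1rel_comp U V W (g : G1hom V W) (f : G1hom U V) :
  G1rel (cmp (proj1_sig g).1 (proj1_sig f).1, cmp (proj1_sig g).2 (proj1_sig f).2).
Proof.
case: g => [[p' q'] /= hg]; case: f => [[p q] /= hf].
case: hf => [[e epq] | [w [-> ->]]].
  subst V; move: epq => /= [-> ->]; rewrite !compf1; exact: hg.
case: hg => [[e epq] | [w' [-> ->]]].
  subst W; move: epq => /= [-> ->]; rewrite !comp1f; right; by exists w.
right; exists (cmp w' (cmp (amor V) w)).
by rewrite !compA.
Qed.

Definition G1comp U V W (g : G1hom V W) (f : G1hom U V) : G1hom U W :=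
  exist _ _ (G1rel_comp g f).

Lemma G1comp1f U V (f : G1hom U V) : G1comp (G1id V) f = f.
Proof. by apply: sig_eqP; case: f => [[p q] ?] /=; rewrite !comp1f. Qed.
Lemma G1compf1 U V (f : G1hom U V) : G1comp f (G1id U) = f.
Proof. by apply: sig_eqP; case: f => [[p q] ?] /=; rewrite !compf1. Qed.
Lemma G1compA U V W X (h : G1hom W X) (g : G1hom V W) (f : G1hom U V) :
  G1comp h (G1comp g f) = G1comp (G1comp h g) f.
Proof. by apply: sig_eqP => /=; rewrite !compA. Qed.

Definition G1 : category :=
  @Cat arrow G1hom G1id G1comp G1comp1f G1compf1 G1compA.

Lemma G1d0_id (U : G1) : (proj1_sig (idm U)).2 = idm (atgt U).
Proof. by []. Qed.
Lemma G1d0_comp (U V W : G1) (g : Hom V W) (f : Hom U V) :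
  (proj1_sig (cmp g f)).2 = cmp (proj1_sig g).2 (proj1_sig f).2.
Proof. by []. Qed.
Definition G1d0 : functor G1 C :=
  @Functor G1 C atgt (fun U V (f : Hom U V) => (proj1_sig f).2) G1d0_id G1d0_comp.

Lemma G1d1_id (U : G1) : (proj1_sig (idm U)).1 = idm (asrc U).
Proof. by []. Qed.
Lemma G1d1_comp (U V W : G1) (g : Hom V W) (f : Hom U V) :
  (proj1_sig (cmp g f)).1 = cmp (proj1_sig g).1 (proj1_sig f).1.
Proof. by []. Qed.
Definition G1d1 : functor G1 C :=
  @Functor G1 C asrc (fun U V (f : Hom U V) => (proj1_sig f).1) G1d1_id G1d1_comp.
End G1.

(* Each face functor F : D -> E of the statement has a section S (a degeneracy
   inserting an identity into a string, resp. c |-> [id_c] for G~_1) with F o S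
   naturally isomorphic to the identity, and every object d is joined to S (F d), in
   one direction or the other, by a morphism that F inverts. If F^* M = A (+) B with
   A, B nonzero, then M ~ S^* F^* M ~ S^* A (+) S^* B. The morphism joining d to
   S (F d) acts invertibly on F^* M, hence on each block of the block-diagonal summand
   decomposition, so A d and A (S (F d)) have the same dimension: S^* A and S^* B are
   nonzero, contradicting the indecomposability of M. *)

From mathcomp Require Import all_boot all_algebra zify.
Set Implicit Arguments. Unset Strict Implicit. Unset Printing Implicit Defensive.
Import GRing.Theory.
Local Open Scope ring_scope.

Definition is_iso (C : category) (x y : C) (f : Hom x y) : Prop :=
  exists g : Hom y x, cmp g f = idm x /\ cmp f g = idm y.

Lemma is_iso_idm (C : category) (x : C) : is_iso (idm x).
Proof. by exists (idm x); rewrite comp1f. Qed.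

Definition mx_invertible (k : fieldType) p q (A : 'M[k]_(p, q)) : Prop :=
  exists B : 'M[k]_(q, p), A *m B = 1%:M /\ B *m A = 1%:M.

Section Matrices.
Variable k : fieldType.

Lemma mx_invertible_dim p q (A : 'M[k]_(p, q)) : mx_invertible A -> p = q.
Proof.
by case=> B [/mulmx1_min le_pq /mulmx1_min le_qp]; apply/eqP; rewrite eqn_leq le_pq.
Qed.

Lemma block_diag_invertible p1 p2 q1 q2 (X : 'M[k]_(p1, q1)) (Y : 'M[k]_(p2, q2)) :
  mx_invertible (block_mx X 0 0 Y) -> mx_invertible X /\ mx_invertible Y.
Proof.
case=> Q []; rewrite -(submxK Q) !mulmx_block (scalar_mx_block p1 p2).
rewrite (scalar_mx_block q1 q2) !mulmx0 !mul0mx !addr0 !add0r.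
move=> /eq_block_mx[XQ _ _ YQ] /eq_block_mx[QX _ _ QY].
by split; [exists (ulsubmx Q) | exists (drsubmx Q)].
Qed.
End Matrices.

Section ModuleIso.
Variables (k : fieldType) (D : category).
Implicit Types M N P A B : module k D.

Lemma mod_iso_trans M N P : mod_iso M N -> mod_iso N P -> mod_iso M P.
Proof.
move=> [phi [psi [inv_phi nat_phi]]] [phi' [psi' [inv_phi' nat_phi']]].
exists (fun x => phi x *m phi' x), (fun x => psi' x *m psi x); split.
  move=> x; have [pp1 pp2] := inv_phi x; have [pp1' pp2'] := inv_phi' x; split.
    by rewrite mulmxA -(mulmxA (phi x)) pp1' mulmx1 pp1.
  by rewrite mulmxA -(mulmxA (psi' x)) pp2 mulmx1 pp2'.
by move=> x y f; rewrite mulmxA nat_phi -!mulmxA nat_phi'.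
Qed.

Lemma mod_iso_mdim M N x : mod_iso M N -> mdim M x = mdim N x.
Proof.
by case=> phi [psi [inv_phi _]]; apply: mx_invertible_dim; exists (psi x).
Qed.

Lemma mact_iso M x y (f : Hom x y) : is_iso f -> mx_invertible (mact M f).
Proof.
by case=> g [gf fg]; exists (mact M g); rewrite -!mact_comp gf fg !mact_id.
Qed.

Lemma mod_iso_mact_invertible M N x y (f : Hom x y) :
  mod_iso M N -> mx_invertible (mact M f) -> mx_invertible (mact N f).
Proof.
move=> [phi [psi [inv_phi nat_phi]]] [Q [fQ Qf]].
have Nf : mact N f = psi x *m mact M f *m phi y.
  by rewrite -mulmxA nat_phi mulmxA (proj2 (inv_phi x)) mul1mx.
exists (psi y *m Q *m phi x); rewrite Nf; split.
  by rewrite !mulmxA -(mulmxA _ (phi y)) (proj1 (inv_phi y)) mulmx1 -(mulmxA _ _ Q)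
    fQ mulmx1 (proj2 (inv_phi x)).
by rewrite !mulmxA -(mulmxA _ (phi x)) (proj1 (inv_phi x)) mulmx1 -(mulmxA _ Q)
  Qf mulmx1 (proj2 (inv_phi y)).
Qed.

Lemma dsum_summand_mdim M A B x y (f : Hom x y) :
  mod_iso M (dsum A B) -> mx_invertible (mact M f) ->
  mdim A x = mdim A y /\ mdim B x = mdim B y.
Proof.
move=> MAB /(mod_iso_mact_invertible MAB) /block_diag_invertible[Af Bf].
by split; apply: mx_invertible_dim; [exact: Af | exact: Bf].
Qed.
End ModuleIso.

Section PullbackIso.
Variables (k : fieldType) (D E : category) (F : functor D E).

Lemma mod_iso_pullback (M N : module k E) :
  mod_iso M N -> mod_iso (pullback F M) (pullback F N).
Proof.
case=> phi [psi [inv_phi nat_phi]].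
by exists (fun x => phi (F x)), (fun x => psi (F x)); split=> [x|x y f] /=.
Qed.

Lemma pullback_dsum (A B : module k E) :
  mod_iso (pullback F (dsum A B)) (dsum (pullback F A) (pullback F B)).
Proof.
exists (fun x => 1%:M), (fun x => 1%:M); split=> [x|x y f] /=.
  by rewrite mulmx1.
by rewrite mulmx1 mul1mx.
Qed.
End PullbackIso.

Section PullbackIndecomposable.
Variables (k : fieldType) (D E : category) (F : functor D E) (S : functor E D).
Variables (eta : forall e : E, Hom e (F (S e))) (eta_inv : forall e : E, Hom (F (S e)) e).
Hypotheses (eta_invK : forall e : E, cmp (eta_inv e) (eta e) = idm e)
  (etaK : forall e : E, cmp (eta e) (eta_inv e) = idm (F (S e)))
  (eta_nat : forall (e e' : E) (g : Hom e e'),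
     cmp (eta e') g = cmp (fmap F (fmap S g)) (eta e)).
Hypothesis linked_to_section : forall d : D,
  (exists c : Hom d (S (F d)), is_iso (fmap F c)) \/
  (exists c : Hom (S (F d)) d, is_iso (fmap F c)).

Lemma mod_iso_pullback_section (M : module k E) :
  mod_iso M (pullback S (pullback F M)).
Proof.
exists (fun e => mact M (eta e)), (fun e => mact M (eta_inv e)); split=> [e|e e' g] /=.
  by rewrite -!mact_comp eta_invK etaK !mact_id.
by rewrite -!mact_comp eta_nat.
Qed.

Lemma pullback_summand_mdim (M : module k E) (A B : module k D) d :
  mod_iso (pullback F M) (dsum A B) ->
  mdim A (S (F d)) = mdim A d /\ mdim B (S (F d)) = mdim B d.
Proof.
move=> MAB; case: (linked_to_section d) => -[c /(mact_iso M) Fc];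
  by have [-> ->] := dsum_summand_mdim MAB Fc.
Qed.

Theorem pullback_indecomposable (M : module k E) :
  indecomposable M -> indecomposable (pullback F M).
Proof.
have M_SFM := mod_iso_pullback_section M.
move=> [[e Me] M_dec]; split.
  by exists (S e); rewrite (mod_iso_mdim e M_SFM) in Me.
move=> [A [B [[a Aa] [[b Bb] MAB]]]]; apply: M_dec.
exists (pullback S A), (pullback S B); split.
  by exists (F a); rewrite /= (proj1 (pullback_summand_mdim a MAB)).
split; first by exists (F b); rewrite /= (proj2 (pullback_summand_mdim b MAB)).
apply: (mod_iso_trans M_SFM); apply: mod_iso_trans (pullback_dsum S A B).
exact: mod_iso_pullback.
Qed.
End PullbackIndecomposable.

Section G1Faces.
Variable C : category.

Definition id_arrow (c : C) : G1 C := Arr (idm c).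

Definition id_arrow_map (c c' : C) (f : Hom c c') : Hom (id_arrow c) (id_arrow c') :=
  exist _ (cmp f (idm c), cmp (idm c') f) (or_intror (ex_intro _ f erefl)).

Lemma id_arrow_map_id c : id_arrow_map (idm c) = idm (id_arrow c).
Proof. by apply: sig_eqP => /=; rewrite comp1f. Qed.

Lemma id_arrow_map_comp c1 c2 c3 (g : Hom c2 c3) (f : Hom c1 c2) :
  id_arrow_map (cmp g f) = cmp (id_arrow_map g) (id_arrow_map f).
Proof. by apply: sig_eqP => /=; rewrite !compf1 !comp1f. Qed.

Definition id_arrow_functor : functor C (G1 C) :=
  Functor id_arrow_map_id id_arrow_map_comp.

Definition arrow_to_tgt (U : G1 C) : Hom U (id_arrow (atgt U)) :=
  exist _ (cmp (idm _) (amor U), cmp (idm _) (idm _))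
    (or_intror (ex_intro _ (idm _) erefl)).

Definition arrow_from_src (U : G1 C) : Hom (id_arrow (asrc U)) U :=
  exist _ (cmp (idm _) (idm _), cmp (amor U) (idm _))
    (or_intror (ex_intro _ (idm _) erefl)).

Lemma pullback_G1d0_indecomposable (k : fieldType) (M : module k C) :
  indecomposable M -> indecomposable (pullback (G1d0 C) M).
Proof.
apply: (@pullback_indecomposable k _ _ (G1d0 C) id_arrow_functor
          (fun c => idm c) (fun c => idm c)) => [c|c|c c' g|U] /=; rewrite ?comp1f ?compf1 //.
by left; exists (arrow_to_tgt U); rewrite /= comp1f; exact: is_iso_idm.
Qed.

Lemma pullback_G1d1_indecomposable (k : fieldType) (M : module k C) :
  indecomposable M -> indecomposable (pullback (G1d1 C) M).
Proof.
apply: (@pullback_indecomposable k _ _ (G1d1 C) id_arrow_functor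
          (fun c => idm c) (fun c => idm c)) => [c|c|c c' g|U] /=; rewrite ?comp1f ?compf1 //.
by right; exists (arrow_from_src U); rewrite /= comp1f; exact: is_iso_idm.
Qed.
End G1Faces.

Unset Implicit Arguments.

Section HomOfEq.
Variable C : category.

Definition hom_of_eq {I : Type} (Y : I -> C) {a b : I} (e : a = b) : Hom (Y a) (Y b) :=
  match e in _ = b0 return Hom (Y a) (Y b0) with erefl => idm (Y a) end.

Lemma hom_of_eq_id (I : eqType) (Y : I -> C) (a : I) (e : a = a) :
  hom_of_eq Y e = idm (Y a).
Proof. by rewrite (eq_irrelevance e erefl). Qed.

Lemma hom_of_eq_irr (I : eqType) (Y : I -> C) (a b : I) (e e' : a = b) :
  hom_of_eq Y e = hom_of_eq Y e'.
Proof. by rewrite (eq_irrelevance e e'). Qed.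

Lemma hom_of_eq_trans (I : Type) (Y : I -> C) (a b c : I) (e1 : a = b) (e2 : b = c) :
  cmp (hom_of_eq Y e2) (hom_of_eq Y e1) = hom_of_eq Y (etrans e1 e2).
Proof. by case: c / e2; case: b / e1; rewrite /= comp1f. Qed.

Lemma castH_hom_of_eq m (Y : 'I_m -> C) (a b a' b' : 'I_m) (ea : a = a') (eb : b = b')
  (f : Hom (Y a) (Y b)) :
  @castH C m Y a b a' b' ea eb f = cmp (hom_of_eq Y eb) (cmp f (hom_of_eq Y (esym ea))).
Proof. by case: a' / ea; case: b' / eb; rewrite /= comp1f compf1. Qed.
End HomOfEq.
Arguments hom_of_eq {C I} Y {a b} e.
Arguments hom_of_eq_id {C I Y a} e.
Arguments hom_of_eq_irr {C I Y a b} e e'.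
Arguments hom_of_eq_trans {C I Y a b c} e1 e2.

Lemma leq_wid_suc m (k : 'I_m) : (wid k <= suc k)%N.
Proof. by rewrite /= /bump /= add1n leqnSn. Qed.
Arguments leq_wid_suc {m} k.

Lemma leq_lift n (i : 'I_n.+1) (a b : 'I_n) : (a <= b)%N -> (lift i a <= lift i b)%N.
Proof. by rewrite /= leq_bump2. Qed.
Arguments leq_lift {n} i {a b} _.

Lemma ord_ind_from m (a : 'I_m.+1) (Q : 'I_m.+1 -> Prop) :
  Q a -> (forall k : 'I_m, (a <= wid k)%N -> Q (wid k) -> Q (suc k)) ->
  forall b : 'I_m.+1, (a <= b)%N -> Q b.
Proof.
move=> Qa IH b; have [bn ebn] : exists bn, val b = bn by exists (val b).
elim: bn b ebn => [|bn IHn] b ebn hab.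
  have -> : b = a by apply: val_inj; apply/eqP; rewrite eqn_leq hab ebn.
  exact: Qa.
have [eab|neab] := eqVneq a b; first by rewrite -eab.
have hk : (bn < m)%N by have := ltn_ord b; rewrite ebn ltnS.
have -> : b = suc (Ordinal hk) by apply: val_inj; rewrite /= /bump /= ebn.
have hw : (a <= wid (Ordinal hk))%N.
  rewrite /= -ltnS -ebn ltn_neqAle hab andbT.
  by apply: contra neab => /eqP e; apply/eqP/val_inj.
exact: IH hw (IHn _ _ hw).
Qed.

Section PathMor.
Variables (C : category) (m : nat) (X : 'I_m.+1 -> C)
  (U : forall k : 'I_m, Hom (X (wid k)) (X (suc k))).

Lemma path_dist0_eq {a : 'I_m.+1} (hd : (a + 0 < m.+1)%N) : a = Ordinal hd.
Proof. by apply: val_inj; rewrite /= addn0. Qed.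
Lemma path_distS_hd {a : 'I_m.+1} {d} : (a + d.+1 < m.+1)%N -> (a + d < m.+1)%N.
Proof. by rewrite addnS => /ltnW. Qed.
Lemma path_distS_k {a : 'I_m.+1} {d} : (a + d.+1 < m.+1)%N -> (a + d < m)%N.
Proof. by rewrite addnS. Qed.
Lemma path_distS_wid {a : 'I_m.+1} {d} (hd : (a + d.+1 < m.+1)%N) :
  Ordinal (path_distS_hd hd) = wid (Ordinal (path_distS_k hd)).
Proof. by apply: val_inj. Qed.
Lemma path_distS_suc {a : 'I_m.+1} {d} (hd : (a + d.+1 < m.+1)%N) :
  suc (Ordinal (path_distS_k hd)) = Ordinal hd.
Proof. by apply: val_inj; rewrite /= /bump /= addnS. Qed.

Fixpoint path_dist (a : 'I_m.+1) (d : nat) {struct d} :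
  forall hd : (a + d < m.+1)%N, Hom (X a) (X (Ordinal hd)) :=
  match d as d0 return forall hd : (a + d0 < m.+1)%N, Hom (X a) (X (Ordinal hd)) with
  | 0 => fun hd => hom_of_eq X (path_dist0_eq hd)
  | d'.+1 => fun hd =>
      cmp (hom_of_eq X (path_distS_suc hd))
        (cmp (U (Ordinal (path_distS_k hd)))
           (cmp (hom_of_eq X (path_distS_wid hd)) (path_dist a d' (path_distS_hd hd))))
  end.

Lemma path_mor_hd {a b : 'I_m.+1} : (a <= b)%N -> (a + (b - a) < m.+1)%N.
Proof. by move=> h; rewrite subnKC. Qed.
Lemma path_mor_eq {a b : 'I_m.+1} (h : (a <= b)%N) : Ordinal (path_mor_hd h) = b.
Proof. by apply: val_inj; rewrite /= subnKC. Qed.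

Definition path_mor (a b : 'I_m.+1) (h : (a <= b)%N) : Hom (X a) (X b) :=
  cmp (hom_of_eq X (path_mor_eq h)) (path_dist a (b - a) (path_mor_hd h)).

Lemma path_mor_irr (a b : 'I_m.+1) h h' : path_mor a b h = path_mor a b h'.
Proof. by rewrite (bool_irrelevance h h'). Qed.

Lemma path_mor_dist (a b : 'I_m.+1) (hab : (a <= b)%N) (d : nat) (hd : (a + d < m.+1)%N)
  (eo : Ordinal hd = b) :
  d = (b - a)%N -> path_mor a b hab = cmp (hom_of_eq X eo) (path_dist a d hd).
Proof.
move=> ed; subst d; move: eo; case: hd / (bool_irrelevance (path_mor_hd hab) hd) => eo.
by rewrite /path_mor (hom_of_eq_irr eo (path_mor_eq hab)).
Qed.

Lemma path_mor_refl (a : 'I_m.+1) h : path_mor a a h = idm (X a).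
Proof.
have hd : (a + 0 < m.+1)%N by rewrite addn0.
rewrite (@path_mor_dist a a h 0 hd (esym (path_dist0_eq hd))); last by rewrite subnn.
by rewrite /= hom_of_eq_trans hom_of_eq_id.
Qed.

Lemma step_cast (k1 k2 : 'I_m) (e : k1 = k2) (e1 : wid k2 = wid k1) (e2 : suc k1 = suc k2) :
  cmp (hom_of_eq X e2) (cmp (U k1) (hom_of_eq X e1)) = U k2.
Proof. by case: k2 / e e1 e2 => e1 e2; rewrite !hom_of_eq_id comp1f compf1. Qed.

Lemma path_mor_last (a : 'I_m.+1) (k : 'I_m) (h : (a <= wid k)%N) (h' : (a <= suc k)%N) :
  path_mor a (suc k) h' = cmp (U k) (path_mor a (wid k) h).
Proof.
have hd : (a + (k - a).+1 < m.+1)%N.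
  by rewrite addnS subnKC //; move: (ltn_ord k); rewrite ltnS.
have eo : Ordinal hd = suc k by apply: val_inj; rewrite /= addnS subnKC.
rewrite (@path_mor_dist a (suc k) h' _ hd eo); last by rewrite /= /bump /= add1n subSn.
have eo2 : Ordinal (path_distS_hd hd) = wid k by apply: val_inj; rewrite /= subnKC.
rewrite (@path_mor_dist a (wid k) h _ (path_distS_hd hd) eo2) //.
have ek : Ordinal (path_distS_k hd) = k by apply: val_inj; rewrite /= subnKC.
have e1 : wid k = wid (Ordinal (path_distS_k hd)) by rewrite ek.
have e2 : suc (Ordinal (path_distS_k hd)) = suc k by rewrite ek.
rewrite -(step_cast _ _ ek e1 e2) /= !compA hom_of_eq_trans -!compA.
congr (cmp _ _); first exact: hom_of_eq_irr.
congr (cmp _ _); rewrite !compA hom_of_eq_trans; congr (cmp _ _).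
exact: hom_of_eq_irr.
Qed.

Lemma path_mor_step (k : 'I_m) h : path_mor (wid k) (suc k) h = U k.
Proof. by rewrite (path_mor_last _ _ (leqnn _)) path_mor_refl compf1. Qed.

Lemma step_path_mor (k : 'I_m) h : U k = path_mor (wid k) (suc k) h.
Proof. by rewrite path_mor_step. Qed.

Lemma path_mor_comp (a b c : 'I_m.+1) (hab : (a <= b)%N) (hbc : (b <= c)%N) hac :
  cmp (path_mor b c hbc) (path_mor a b hab) = path_mor a c hac.
Proof.
move: hbc hac; suff key : forall c' : 'I_m.+1, (b <= c')%N -> forall hbc hac,
    cmp (path_mor b c' hbc) (path_mor a b hab) = path_mor a c' hac.
  by move=> hbc; apply: key.
apply: ord_ind_from => [hbc hac|k hk IH hbc hac].
  by rewrite path_mor_refl comp1f (path_mor_irr _ _ hab hac).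
have hak := leq_trans hab hk.
by rewrite (path_mor_last _ _ hk) (path_mor_last _ _ hak) -compA (IH hk hak).
Qed.

Lemma path_mor_antisym (a b : 'I_m.+1) h h' :
  cmp (path_mor b a h) (path_mor a b h') = idm (X a).
Proof. by rewrite (path_mor_comp _ _ _ h' h (leqnn a)) path_mor_refl. Qed.

Lemma path_mor_cast (a b a' b' : 'I_m.+1) (ea : a' = a) (eb : b = b') h h' :
  cmp (hom_of_eq X eb) (cmp (path_mor a b h) (hom_of_eq X ea)) = path_mor a' b' h'.
Proof.
case: b' / eb h'; move: h; case: a / ea => h h' /=.
by rewrite comp1f compf1 (path_mor_irr _ _ h h').
Qed.

Lemma path_mor_castL (a b b' : 'I_m.+1) (eb : b = b') h h' :
  cmp (hom_of_eq X eb) (path_mor a b h) = path_mor a b' h'.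
Proof. by rewrite -(path_mor_cast _ _ _ _ (erefl a) eb h h') /= compf1. Qed.
End PathMor.
Arguments path_mor {C m} X U a b h.
Arguments path_mor_irr {C m X U a b} h h'.
Arguments path_mor_refl {C m X U a} h.
Arguments path_mor_last {C m X U a k} h h'.
Arguments step_path_mor {C m X} U k h.
Arguments path_mor_comp {C m X U a b c} hab hbc hac.
Arguments path_mor_antisym {C m X U a b} h h'.
Arguments path_mor_cast {C m X U a b a' b'} ea eb h h'.
Arguments path_mor_castL {C m X U a b b'} eb h h'.

Lemma path_mor_nat (C : category) m (X Y : 'I_m.+1 -> C)
  (U : forall k : 'I_m, Hom (X (wid k)) (X (suc k)))
  (V : forall k : 'I_m, Hom (Y (wid k)) (Y (suc k)))
  (f : forall j, Hom (X j) (Y j))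
  (hf : forall k, cmp (V k) (f (wid k)) = cmp (f (suc k)) (U k)) (a b : 'I_m.+1) h :
  cmp (path_mor Y V a b h) (f a) = cmp (f b) (path_mor X U a b h).
Proof.
move: h; suff key : forall b' : 'I_m.+1, (a <= b')%N -> forall h,
    cmp (path_mor Y V a b' h) (f a) = cmp (f b') (path_mor X U a b' h).
  by move=> h; apply: key.
apply: ord_ind_from => [h|k hk IH h].
  by rewrite !path_mor_refl comp1f compf1.
by rewrite (path_mor_last hk) (path_mor_last hk) -compA IH compA hf -compA.
Qed.
Arguments path_mor_nat {C m X Y U V f} hf a b h.

Lemma path_mor_reindex (C : category) m p (X : 'I_m.+1 -> C)
  (U : forall k : 'I_m, Hom (X (wid k)) (X (suc k)))
  (g : 'I_p.+1 -> 'I_m.+1) (hg : forall a b : 'I_p.+1, (a <= b)%N -> (g a <= g b)%N)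
  (V : forall k : 'I_p, Hom (X (g (wid k))) (X (g (suc k))))
  (hV : forall k h, V k = path_mor X U (g (wid k)) (g (suc k)) h)
  (a b : 'I_p.+1) h h' :
  path_mor (fun j => X (g j)) V a b h = path_mor X U (g a) (g b) h'.
Proof.
move: h h'; suff key : forall b' : 'I_p.+1, (a <= b')%N -> forall h h',
    path_mor (fun j => X (g j)) V a b' h = path_mor X U (g a) (g b') h'.
  by move=> h; apply: key.
apply: ord_ind_from => [h h'|k hk IH h h'].
  by rewrite !path_mor_refl.
have h1 := hg _ _ (leq_wid_suc k).
have h2 := hg _ _ hk.
by rewrite (path_mor_last hk) (IH hk h2) (hV _ h1) path_mor_comp.
Qed.
Arguments path_mor_reindex {C m p X U g} hg {V} hV a b h h'.

Lemma face_mor_path (C : category) n (i : 'I_n.+2) (X : 'I_n.+2 -> C)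
  (U : forall k : 'I_n.+1, Hom (X (wid k)) (X (suc k))) (k : 'I_n) h :
  face_mor i U k = path_mor X U (lift i (wid k)) (lift i (suc k)) h.
Proof.
rewrite /face_mor; case: (ltnP k.+1 i) => h1.
  by rewrite castH_hom_of_eq (step_path_mor _ _ (leq_wid_suc _)) path_mor_cast.
case: (ltnP i k.+1) => h2.
  by rewrite castH_hom_of_eq (step_path_mor _ _ (leq_wid_suc _)) path_mor_cast.
rewrite castH_hom_of_eq castH_hom_of_eq /= compf1.
have h_mid : (wid (wid k) <= wid (suc k))%N by rewrite /= /bump /=; lia.
rewrite (step_path_mor U (wid k) (leq_wid_suc _)) (path_mor_castL (faceC_m k) _ h_mid).
rewrite (step_path_mor U (suc k) (leq_wid_suc _)).
have h_end : (wid (wid k) <= suc (suc k))%N by rewrite /= /bump /=; lia.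
by rewrite (path_mor_comp _ _ h_end) path_mor_cast.
Qed.
Arguments face_mor_path {C n i X U k} h.

Section LadderIso.
Variables (C : category) (n : nat) (s t : string C n) (f : ladder s t)
  (g : forall j, Hom (sobj t j) (sobj s j))
  (gf : forall j, cmp (g j) (lmap f j) = idm _)
  (fg : forall j, cmp (lmap f j) (g j) = idm _).

Lemma ladder_inv_comm (k : 'I_n) : cmp (smor s k) (g (wid k)) = cmp (g (suc k)) (smor t k).
Proof.
rewrite -[cmp (smor s k) _]comp1f -(gf (suc k)) -!compA; congr (cmp _ _).
by rewrite compA -lcomm -compA fg compf1.
Qed.

Definition ladder_inv : ladder t s := Lad ladder_inv_comm.

Lemma ladder_is_iso : @is_iso (Estr C n) s t f.
Proof. by exists ladder_inv; split; apply: ladder_eq. Qed.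
End LadderIso.
Arguments ladder_inv {C n s t} f g gf fg.
Arguments ladder_is_iso {C n s t} f g gf fg.

Section FaceSection.
Variables (C : category) (n : nat) (i : 'I_n.+2).

Local Notation spath t := (path_mor (sobj t) (@smor C _ t)).

(* The degeneracy collapsing positions [i] and [i+1] (positions [n] and [n+1] when
   [i = n+1]); it is a retraction of [lift i]. *)
Definition degen (x : 'I_n.+2) : 'I_n.+1 :=
  inord (if (x <= i)%N then minn x n else x.-1).

Lemma degen_val x : (degen x : nat) = if (x <= i)%N then minn x n else x.-1.
Proof.
rewrite inordK //; case: ifP => _; first by rewrite ltnS geq_minr.
by have := ltn_ord x; lia.
Qed.

Lemma degen_lift (j : 'I_n.+1) : degen (lift i j) = j.
Proof.
apply: ord_inj; rewrite degen_val /= /bump.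
have := ltn_ord j; have := ltn_ord i.
by case: (leqP i j) => /= h_ij; rewrite ?add0n ?add1n; case: ifP => h; lia.
Qed.

Lemma degen_mono (a b : 'I_n.+2) : (a <= b)%N -> (degen a <= degen b)%N.
Proof.
rewrite !degen_val; have := ltn_ord a; have := ltn_ord b.
by case: ifP => h1; case: ifP => h2; lia.
Qed.

Lemma le_lift_degen (x : 'I_n.+2) : (i < n.+1)%N -> (x <= lift i (degen x))%N.
Proof.
move=> lt_in; rewrite /= /bump degen_val; have := ltn_ord x.
by case: ifP => h1; case: leqP => h2 /=; lia.
Qed.

Lemma lift_degen_le (x : 'I_n.+2) : (n.+1 <= i)%N -> (lift i (degen x) <= x)%N.
Proof.
move=> le_ni; rewrite /= /bump degen_val; have := ltn_ord x; have := ltn_ord i.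
by case: ifP => h1; case: leqP => h2 /=; lia.
Qed.

Lemma degen_wid_suc (k : 'I_n.+1) : (degen (wid k) <= degen (suc k))%N.
Proof. exact: degen_mono _ _ (leq_wid_suc k). Qed.

Lemma leq_degen_lift (j : 'I_n.+1) : (j <= degen (lift i j))%N.
Proof. by rewrite degen_lift. Qed.

Lemma degen_lift_leq (j : 'I_n.+1) : (degen (lift i j) <= j)%N.
Proof. by rewrite degen_lift. Qed.

Definition degen_str (t : string C n) : string C n.+1 :=
  @Str C n.+1 (fun x => sobj t (degen x))
    (fun k => spath t (degen (wid k)) (degen (suc k)) (degen_wid_suc k)).

Definition degen_lad (s t : string C n) (f : ladder s t) :
  ladder (degen_str s) (degen_str t) :=
  @Lad C n.+1 (degen_str s) (degen_str t) (fun x => lmap f (degen x))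
    (fun k => path_mor_nat (lcomm f) _ _ _).

Lemma degen_lad_id (s : Estr C n) : degen_lad s s (idm s) = @idm (Estr C n.+1) (degen_str s).
Proof. by apply: ladder_eq. Qed.

Lemma degen_lad_comp (s t u : Estr C n) (g : Hom t u) (f : Hom s t) :
  degen_lad s u (cmp g f) = @cmp (Estr C n.+1) _ _ _ (degen_lad t u g) (degen_lad s t f).
Proof. by apply: ladder_eq. Qed.

Definition degeneracy : functor (Estr C n) (Estr C n.+1) :=
  @Functor (Estr C n) (Estr C n.+1) degen_str degen_lad degen_lad_id degen_lad_comp.

Lemma smor_face_degen (t : string C n) (k : 'I_n) h :
  smor (face_str i (degen_str t)) k =
  spath t (degen (lift i (wid k))) (degen (lift i (suc k))) h.
Proof.
rewrite /= (face_mor_path (leq_lift i (leq_wid_suc k))).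
apply: (path_mor_reindex degen_mono) => k' h'.
exact: path_mor_irr.
Qed.

Lemma smor_degen_face (s : string C n.+1) (k : 'I_n.+1) h :
  smor (degen_str (face_str i s)) k =
  spath s (lift i (degen (wid k))) (lift i (degen (suc k))) h.
Proof.
apply: (path_mor_reindex (fun a b => @leq_lift _ i a b)) => k' h'.
by rewrite /= (face_mor_path h').
Qed.

Lemma face_degen_unit_comm (t : string C n) (k : 'I_n) :
  cmp (smor (face_str i (degen_str t)) k) (spath t (wid k) _ (leq_degen_lift (wid k))) =
  cmp (spath t (suc k) _ (leq_degen_lift (suc k))) (smor t k).
Proof.
rewrite (smor_face_degen t k (degen_mono _ _ (leq_lift i (leq_wid_suc k)))).
rewrite (step_path_mor _ k (leq_wid_suc k)).
have h : (wid k <= degen (lift i (suc k)))%N by rewrite degen_lift leq_wid_suc.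
by rewrite !(path_mor_comp _ _ h).
Qed.

Definition face_degen_unit (t : string C n) : ladder t (face_str i (degen_str t)) :=
  @Lad C n t (face_str i (degen_str t)) (fun j => spath t j _ (leq_degen_lift j))
    (face_degen_unit_comm t).

Definition face_degen_unit_inv (t : string C n) : ladder (face_str i (degen_str t)) t :=
  ladder_inv (face_degen_unit t) (fun j => spath t (degen (lift i j)) j (degen_lift_leq j))
    (fun j => @path_mor_antisym C n (sobj t) (@smor C _ t) _ _ _ _)
    (fun j => @path_mor_antisym C n (sobj t) (@smor C _ t) _ _ _ _).

Section LowFace.
Hypothesis lt_in : (i < n.+1)%N.

Lemma to_degen_face_comm (s : string C n.+1) (k : 'I_n.+1) :
  cmp (smor (degen_str (face_str i s)) k) (spath s (wid k) _ (le_lift_degen (wid k) lt_in)) =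
  cmp (spath s (suc k) _ (le_lift_degen (suc k) lt_in)) (smor s k).
Proof.
rewrite (smor_degen_face s k (leq_lift i (degen_wid_suc k))).
rewrite (step_path_mor _ k (leq_wid_suc k)).
have h := leq_trans (leq_wid_suc k) (le_lift_degen (suc k) lt_in).
by rewrite !(path_mor_comp _ _ h).
Qed.

Definition to_degen_face (s : string C n.+1) : ladder s (degen_str (face_str i s)) :=
  @Lad C n.+1 s (degen_str (face_str i s)) (fun x => spath s x _ (le_lift_degen x lt_in))
    (to_degen_face_comm s).

Lemma face_to_degen_face_is_iso (s : string C n.+1) :
  is_iso (fmap (face C i) (to_degen_face s)).
Proof.
apply: (ladder_is_iso (fmap (face C i) (to_degen_face s))
          (fun j => spath s _ _ (leq_lift i (degen_lift_leq j)))) => j;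
  exact: (@path_mor_antisym C n.+1 (sobj s) (@smor C _ s) _ _ _ _).
Qed.
End LowFace.

Section TopFace.
Hypothesis le_ni : (n.+1 <= i)%N.

Lemma from_degen_face_comm (s : string C n.+1) (k : 'I_n.+1) :
  cmp (smor s k) (spath s _ (wid k) (lift_degen_le (wid k) le_ni)) =
  cmp (spath s _ (suc k) (lift_degen_le (suc k) le_ni))
    (smor (degen_str (face_str i s)) k).
Proof.
rewrite (smor_degen_face s k (leq_lift i (degen_wid_suc k))).
rewrite (step_path_mor _ k (leq_wid_suc k)).
have h := leq_trans (lift_degen_le (wid k) le_ni) (leq_wid_suc k).
by rewrite !(path_mor_comp _ _ h).
Qed.

Definition from_degen_face (s : string C n.+1) : ladder (degen_str (face_str i s)) s :=
  @Lad C n.+1 (degen_str (face_str i s)) s (fun x => spath s _ x (lift_degen_le x le_ni))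
    (from_degen_face_comm s).

Lemma face_from_degen_face_is_iso (s : string C n.+1) :
  is_iso (fmap (face C i) (from_degen_face s)).
Proof.
apply: (ladder_is_iso (fmap (face C i) (from_degen_face s))
          (fun j => spath s _ _ (leq_lift i (leq_degen_lift j)))) => j;
  exact: (@path_mor_antisym C n.+1 (sobj s) (@smor C _ s) _ _ _ _).
Qed.
End TopFace.

Lemma face_pullback_indecomposable (k : fieldType) (M : module k (Estr C n)) :
  indecomposable M -> indecomposable (pullback (face C i) M).
Proof.
apply: (@pullback_indecomposable k _ _ (face C i) degeneracy
          face_degen_unit face_degen_unit_inv) => [t|t|t t' g|s].
- by apply: ladder_eq => j /=; apply: path_mor_antisym.
- by apply: ladder_eq => j /=; apply: path_mor_antisym.
- by apply: ladder_eq => j /=; apply: (path_mor_nat (lcomm g)).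
case: (ltnP i n.+1) => hi.
  by left; exists (to_degen_face hi s); apply: face_to_degen_face_is_iso.
by right; exists (from_degen_face hi s); apply: face_from_degen_face_is_iso.
Qed.
End FaceSection.

Theorem lemma3p8 (k : fieldType) (C : category) :
  (forall (n : nat) (M : module k (Estr C n)),
      indecomposable M ->
      forall i : 'I_n.+2, indecomposable (pullback (face C i) M)) /\
  (forall M : module k C,
      indecomposable M ->
      indecomposable (pullback (G1d0 C) M) /\
      indecomposable (pullback (G1d1 C) M)).
Proof.
split=> [n M M_indec i | M M_indec].
  exact: face_pullback_indecomposable.
by split; [apply: pullback_G1d0_indecomposable | apply: pullback_G1d1_indecomposable].
Qed.
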